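(* Let $d\ge1$, $0<c\le\infty$, $X=(0,c)$, $X_{\mathrm{SYM}}=(-c,0)\cup(0,c)$, $\mathbb{X}=(X_{\mathrm{SYM}})^d$. For $i=1,\dots,d$ let $w_i\in C^2(X)$ be strictly positive, $p_i\in C^2(X)$ real-valued and nonvanishing, $q_i\in C^1(X)$ real-valued, $a_i\ge0$ constants, $\mu_i(dx)=w_i(x)dx$ on $X$, $\delta_i=p_i\frac{d}{dx}+q_i$, $\delta_i^*=-p_i\frac{d}{dx}+q_i-p_i\frac{w_i'}{w_i}-p_i'$, $L_i=a_i+\delta_i^*\delta_i$. Assume for each $i$ there is an orthonormal basis $\{\varphi^{(i)}_k:k\in\mathbb{N}\}$ of $L^2(X,\mu_i)$ with $\varphi^{(i)}_k\in C^\infty(X)$, $L_i\varphi^{(i)}_k=\lambda^{(i)}_k\varphi^{(i)}_k$, $\lambda^{(i)}_0<\lambda^{(i)}_1<\dots\to\infty$, $\delta_i\varphi^{(i)}_k\in L^2(X,\mu_i)$ and $\langle\delta_i\varphi^{(i)}_k,\delta_i\varphi^{(i)}_m\rangle_{\mu_i}=\langle\delta_i^*\delta_i\varphi^{(i)}_k,\varphi^{(i)}_m\rangle_{\mu_i}$ for all $k,m$; assume moreover $a_i=\lambda^{(i)}_0$ for every $i$. Extend $w_i,p_i,\varphi^{(i)}_k$ evenly and $q_i$ oddly to $X_{\mathrm{SYM}}$, define $\Phi^{(i)}_n=\frac1{\sqrt2}\varphi^{(i)}_{n/2}$ for even $n$, $\Phi^{(i)}_n=-\frac1{\sqrt2}(\lambda^{(i)}_{(n+1)/2}-a_i)^{-1/2}\delta_i\varphi^{(i)}_{(n+1)/2}$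 for odd $n$, $\Phi_n=\Phi^{(1)}_{n_1}\otimes\cdots\otimes\Phi^{(d)}_{n_d}$ for $n\in\mathbb{N}^d$, with the convention $\Phi_n\equiv0$ if $n\in\mathbb{Z}^d\setminus\mathbb{N}^d$, and $\langle n\rangle_j=\lfloor\frac{n_j+1}2\rfloor$. Let $$D_jf(x)=p_j(x_j)\partial_{x_j}f(x)+q_j(x_j)\tfrac{f(x)+f(\sigma_jx)}{2}+\Big[p_j(x_j)\tfrac{w_j'(x_j)}{w_j(x_j)}+p_j'(x_j)-q_j(x_j)\Big]\tfrac{f(x)-f(\sigma_jx)}{2}$$ ($\sigma_j$ the reflection changing the sign of the $j$th coordinate). Then for $j=1,\dots,d$, $N\ge1$ and $n\in\mathbb{N}^d$, $$D_j^N\Phi_n=\begin{cases}(-1)^{N/2}\big(\lambda^{(j)}_{\langle n\rangle_j}-a_j\big)^{N/2}\Phi_n,& N\text{ even},\\ (-1)^{n_j+1+(N-1)/2}\big(\lambda^{(j)}_{\langle n\rangle_j}-a_j\big)^{N/2}\Phi_{n-(-1)^{n_j}e_j},& N\text{ odd},\end{cases}$$ where $e_j$ is the $j$th coordinate vector.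
   Context: $\mathbb{N}=\{0,1,2,\dots\}$; $\lfloor\cdot\rfloor$ is the floor function. *)

From HB Require Import structures.
From mathcomp Require Import all_boot all_order all_algebra.
From mathcomp Require Import all_classical all_reals all_analysis.
Set Implicit Arguments. Unset Strict Implicit. Unset Printing Implicit Defensive.
Import Order.TTheory GRing.Theory Num.Theory.
Import numFieldNormedType.Exports.
Local Open Scope classical_set_scope.
Local Open Scope ring_scope.

Section Defs.
Variable R : realType.

Definition Xset (c : \bar R) : set R := [set x | 0 < x /\ (x%:E < c)%E].
Definition Xsym (c : \bar R) : set R := [set x | Xset c x \/ Xset c (- x)].
Definition XX (d : nat) (c : \bar R) : set ('I_d -> R) :=
  [set x | forall i, Xsym c (x i)].

Definition Cn_on (n : nat) (A : set R) (f : R -> R) : Prop :=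
  (forall k, (k < n)%N -> forall x, A x -> derivable (derive1n k f) x 1) /\
  (forall x, A x -> {for x, continuous (derive1n n f)}).
Definition Cinf_on (A : set R) (f : R -> R) : Prop := forall n, Cn_on n A f.

Definition delta (p q : R -> R) (f : R -> R) : R -> R :=
  fun x => p x * derive1 f x + q x * f x.
Definition delta_star (w p q : R -> R) (g : R -> R) : R -> R :=
  fun x => - (p x * derive1 g x) + (q x - p x * derive1 w x / w x - derive1 p x) * g x.

Definition L2 (c : \bar R) (w f : R -> R) : Prop :=
  measurable_fun (Xset c) f /\
  (\int[lebesgue_measure]_(x in Xset c) ((f x) ^+ 2 * w x)%:E < +oo)%E.
Definition ip (c : \bar R) (w f g : R -> R) : \bar R :=
  (\int[lebesgue_measure]_(x in Xset c) (f x * g x * w x)%:E)%E.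

Definition ONB (c : \bar R) (w : R -> R) (phi : nat -> R -> R) : Prop :=
  (forall k, L2 c w (phi k)) /\
  (forall k m, ip c w (phi k) (phi m) = (k == m)%:R%:E) /\
  (forall f, L2 c w f -> (forall k, ip c w f (phi k) = 0%E) -> ip c w f f = 0%E).

Definition even_ext (f : R -> R) : R -> R := fun x => f `|x|.
Definition odd_ext (f : R -> R) : R -> R := fun x => Num.sg x * f `|x|.

Definition Phi1 (p q : R -> R) (a : R) (lam : nat -> R) (phi : nat -> R -> R)
  (n : nat) : R -> R :=
  if ~~ odd n then fun x => (Num.sqrt 2)^-1 * even_ext (phi n./2) x
  else fun x => - ((Num.sqrt 2)^-1 * (Num.sqrt (lam (n.+1)./2 - a))^-1 *
     delta (even_ext p) (odd_ext q) (even_ext (phi (n.+1)./2)) x).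

Definition Phi (d : nat) (p q : 'I_d -> R -> R) (a : 'I_d -> R)
  (lam : 'I_d -> nat -> R) (phi : 'I_d -> nat -> R -> R) (n : 'I_d -> int) :
  ('I_d -> R) -> R :=
  fun x => if [forall i, (0 <= n i)%R]
    then \prod_(i < d) Phi1 (p i) (q i) (a i) (lam i) (phi i) `|n i|%N (x i)
    else 0.

Definition upd (d : nat) (x : 'I_d -> R) (j : 'I_d) (t : R) : 'I_d -> R :=
  fun i => if i == j then t else x i.
Definition refl (d : nat) (j : 'I_d) (x : 'I_d -> R) : 'I_d -> R :=
  fun i => if i == j then - x i else x i.
Definition partial (d : nat) (j : 'I_d) (f : ('I_d -> R) -> R) (x : 'I_d -> R) : R :=
  derive1 (fun t => f (upd x j t)) (x j).

Definition Dj (d : nat) (w p q : 'I_d -> R -> R) (j : 'I_d)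
  (f : ('I_d -> R) -> R) : ('I_d -> R) -> R :=
  fun x =>
    let we := even_ext (w j) in let pe := even_ext (p j) in
    let qe := odd_ext (q j) in
    pe (x j) * partial j f x + qe (x j) * ((f x + f (refl j x)) / 2)
    + (pe (x j) * derive1 we (x j) / we (x j) + derive1 pe (x j) - qe (x j))
      * ((f x - f (refl j x)) / 2).

End Defs.

(* On the j-th coordinate, D_j acts on an even function f(|t|) as the
   extended delta_j, giving sg(t) (delta_j f)(|t|), and on an odd function
   sg(t) g(|t|) as -delta_j^*, giving -(delta_j^* g)(|t|).  Hence D_j sends
   Phi_n to +-sqrt(lam_<n>_j - a_j) Phi_(n -+ e_j): delta_j maps phi_k to its
   odd partner, and delta_j^* delta_j phi_k = (lam_k - a_j) phi_k maps it back.
   The ground state is annihilated: a_j = lam_0 gives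
   |delta_j phi_0|^2 = <delta_j^* delta_j phi_0, phi_0> = 0, so the continuous
   function delta_j phi_0 vanishes since w_j > 0.  Thus
   D_j^2 Phi_n = -(lam_<n>_j - a_j) Phi_n, and iterating gives the formula. *)

From HB Require Import structures.
From mathcomp Require Import all_boot all_order all_algebra.
From mathcomp Require Import all_classical all_reals all_analysis.
From mathcomp Require Import measurable_realfun lra ring zify.
Import Order.TTheory GRing.Theory Num.Theory.
Import numFieldNormedType.Exports.
Local Open Scope classical_set_scope.
Local Open Scope ring_scope.
Set Implicit Arguments. Unset Strict Implicit. Unset Printing Implicit Defensive.

Section SymmetricDomain.
Variables (R : realType) (c : \bar R).

Lemma Xset_open : open (Xset c).
Proof.
have -> : Xset c = [set x : R | 0 < x] `&` [set x | (x%:E < c)%E] by [].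
apply: openI; first exact: open_gt.
case: c => [r||].
- have -> : [set x : R | (x%:E < r%:E)%E] = [set x | x < r].
    by apply/seteqP; split => x /=; rewrite lte_fin.
  exact: open_lt.
- have -> : [set x : R | (x%:E < +oo)%E] = setT.
    by apply/seteqP; split => x //= _; rewrite ltey.
  exact: openT.
- have -> : [set x : R | (x%:E < -oo)%E] = set0.
    by apply/seteqP; split => x //=; rewrite ltNge leNye.
  exact: open0.
Qed.

Lemma Xsym_open : open (Xsym c).
Proof.
have -> : Xsym c = Xset c `|` -%R @^-1` Xset c by [].
apply: openU; first exact: Xset_open.
by apply: open_comp => [x _|]; [exact: continuousN | exact: Xset_open].
Qed.

Lemma Xsym_nbhs t : Xsym c t -> \forall y \near t, Xsym c y.
Proof. by move=> Xt; apply: open_nbhs_nbhs; split => //; exact: Xsym_open. Qed.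

Lemma Xsym_neq0 t : Xsym c t -> t != 0.
Proof. by case=> -[t0 _]; [exact: lt0r_neq0 | rewrite -oppr_eq0 lt0r_neq0]. Qed.

Lemma Xsym_norm t : Xsym c t -> Xset c `|t|.
Proof.
by case=> -[t0 tc]; [rewrite gtr0_norm | rewrite ltr0_norm -?oppr_gt0].
Qed.

Lemma XsymN t : Xsym c t -> Xsym c (- t).
Proof. by case=> Xt; [right; rewrite opprK | left]. Qed.

End SymmetricDomain.

Section RealDerivatives.
Variable R : realType.
Implicit Types (f : R -> R) (t : R).

Lemma derivable_continuous f t : derivable f t 1 -> {for t, continuous f}.
Proof. by move=> /derivable1_diffP; exact: differentiable_continuous. Qed.

Lemma near_sg t : t != 0 -> \forall y \near t, Num.sg y = Num.sg t.
Proof.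
case: (ltgtP t 0) => // t0 _.
- by near=> y; rewrite !ltr0_sg //; near: y; exact: lt_nbhsl.
- by near=> y; rewrite !gtr0_sg //; near: y; exact: lt_nbhsr.
Unshelve. all: by end_near. Qed.

Lemma near_norm t : t != 0 -> \forall y \near t, `|y| = Num.sg t * y.
Proof.
move=> t0; near=> y; rewrite normrEsg; congr (_ * _).
by near: y; exact: near_sg.
Unshelve. all: by end_near. Qed.

Lemma is_derive_even_ext f t : t != 0 -> derivable f `|t| 1 ->
  is_derive t 1 (even_ext f) (Num.sg t * derive1 f `|t|).
Proof.
move=> t0 df.
have ext_near : \forall y \near t, (f \o *%R (Num.sg t)) y = even_ext f y.
  near=> y; rewrite /even_ext /=; congr f; apply/esym.
  by near: y; exact: near_norm.
apply: near_eq_is_derive ext_near _; rewrite mulrC.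
apply: is_derive1_comp.
  by rewrite -normrEsg derive1E; exact: derivableP.
by rewrite -[X in is_derive _ _ _ X]mulr1; exact: is_deriveZ.
Unshelve. all: by end_near. Qed.

Lemma is_derive_odd_ext f t : t != 0 -> derivable f `|t| 1 ->
  is_derive t 1 (odd_ext f) (derive1 f `|t|).
Proof.
move=> t0 df.
have ext_near : \forall y \near t, (Num.sg t *: even_ext f) y = odd_ext f y.
  near=> y; rewrite /odd_ext /even_ext /=; congr (_ * _); apply/esym.
  by near: y; exact: near_sg.
apply: near_eq_is_derive ext_near _.
apply: is_derive_eq (is_deriveZ _ (is_derive_even_ext t0 df)) _.
by rewrite /GRing.scale /= mulrA -expr2 sqr_sg t0 mul1r.
Unshelve. all: by end_near. Qed.

Lemma derivable_even_ext f t : t != 0 -> derivable f `|t| 1 ->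
  derivable (even_ext f) t 1.
Proof. by move=> t0 /(is_derive_even_ext t0) []. Qed.

Lemma derive1_even_ext f t : t != 0 -> derivable f `|t| 1 ->
  derive1 (even_ext f) t = Num.sg t * derive1 f `|t|.
Proof. by move=> t0 /(is_derive_even_ext t0) [_]; rewrite !derive1E. Qed.

Lemma derivable_odd_ext f t : t != 0 -> derivable f `|t| 1 ->
  derivable (odd_ext f) t 1.
Proof. by move=> t0 /(is_derive_odd_ext t0) []. Qed.

Lemma derive1_odd_ext f t : t != 0 -> derivable f `|t| 1 ->
  derive1 (odd_ext f) t = derive1 f `|t|.
Proof. by move=> t0 /(is_derive_odd_ext t0) [_]; rewrite !derive1E. Qed.

End RealDerivatives.

Section ZeroIntegral.
Variable R : realType.

Lemma continuous_ge0_integral_eq0 (A : set R) (g : R -> R) : open A ->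
  (forall x, A x -> {for x, continuous g}) -> (forall x, A x -> 0 <= g x) ->
  (\int[lebesgue_measure]_(x in A) (g x)%:E = 0)%E -> forall x, A x -> g x = 0.
Proof.
move=> oA cg g0 I0 x Ax; apply/eqP; rewrite eq_le g0 // andbT leNgt.
apply/negP => gx0.
have [e e0 ball_sub] : exists2 e : R, 0 < e &
    ball x e `<=` [set y | A y /\ g x / 2 < g y].
  apply/nbhs_ballP; near=> y; split.
    by near: y; apply: open_nbhs_nbhs; split.
  have : `|g x - g y| < g x / 2.
    by near: y; apply: (cvgr_dist_lt _ _ (cg x Ax)); rewrite divr_gt0.
  by have := ler_norm (g x - g y); lra.
have mA := open_measurable oA.
have mg : measurable_fun A (EFin \o g).
  apply/measurable_EFinP; apply: open_continuous_measurable_fun => // y.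
  by move=> /set_mem; exact: cg.
have : ((g x / 2 * (e *+ 2))%:E <= \int[lebesgue_measure]_(y in A) (g y)%:E)%E.
  rewrite EFinM -(lebesgue_measure_ball x (ltW e0)) -integral_cst; last first.
    exact: measurable_ball.
  apply: (@le_trans _ _ (\int[lebesgue_measure]_(y in ball x e) (g y)%:E)%E).
    apply: ge0_le_integral => //; first exact: measurable_ball.
    - by move=> y _; rewrite lee_fin; lra.
    - by apply: measurable_funS mg => // y /ball_sub[].
    - by move=> y /ball_sub[_ /ltW]; rewrite lee_fin.
  apply: ge0_subset_integral => //; first exact: measurable_ball.
  by move=> y /ball_sub[].
rewrite I0 leNgt => /negP; apply.
rewrite lte_fin pmulr_rgt0 ?divr_gt0 // pmulrn_lgt0.
Unshelve. all: by end_near. Qed.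

Lemma ip_self_eq0 (c : \bar R) (w f : R -> R) :
  (forall x, Xset c x -> {for x, continuous w}) ->
  (forall x, Xset c x -> {for x, continuous f}) ->
  (forall x, Xset c x -> 0 < w x) ->
  ip c w f f = 0%E -> forall x, Xset c x -> f x = 0.
Proof.
move=> cw cf w0 ff0 x Xx.
have : f x * f x * w x = 0.
  apply: (continuous_ge0_integral_eq0 (g := fun y => f y * f y * w y)
    (@Xset_open R c) _ _ ff0 Xx) => y Xy.
  - by apply: cvgM; [apply: cvgM|]; [exact: cf | exact: cf | exact: cw].
  - by rewrite -expr2 mulr_ge0 ?sqr_ge0 // ltW // w0.
by move/eqP; rewrite mulf_eq0 (gt_eqF (w0 _ Xx)) orbF mulf_eq0 orbb => /eqP.
Qed.

End ZeroIntegral.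

Section ReflectionOperator.
Variables (R : realType) (c : \bar R) (w p q : R -> R).
Implicit Types (f g F G : R -> R) (k t : R).
Hypothesis dw : forall u, Xset c u -> derivable w u 1.
Hypothesis dp : forall u, Xset c u -> derivable p u 1.

(* [Dj] acting on the j-th variable alone, see [Dj_tensor]. *)
Definition D1 (F : R -> R) (t : R) : R :=
  even_ext p t * derive1 F t + odd_ext q t * ((F t + F (- t)) / 2)
  + (even_ext p t * derive1 (even_ext w) t / even_ext w t
     + derive1 (even_ext p) t - odd_ext q t) * ((F t - F (- t)) / 2).

Lemma D1_local F G t : Xsym c t -> (forall y, Xsym c y -> F y = G y) ->
  D1 F t = D1 G t.
Proof.
move=> Xt FG; rewrite /D1 !derive1E (@near_eq_derive _ _ _ F G t 1).
  by rewrite !FG //; exact: XsymN.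
by near=> y; apply: FG; near: y; exact: Xsym_nbhs.
Unshelve. all: by end_near. Qed.

Lemma D1_scale F k t : derivable F t 1 -> D1 (fun y => k * F y) t = k * D1 F t.
Proof. by move=> dF; rewrite /D1 derive1Ml //; ring. Qed.

Lemma delta_even_ext f t : Xsym c t -> derivable f `|t| 1 ->
  delta (even_ext p) (odd_ext q) (even_ext f) t = odd_ext (delta p q f) t.
Proof.
move=> Xt df; rewrite /delta /odd_ext /even_ext.
by rewrite derive1_even_ext ?(Xsym_neq0 Xt) //; ring.
Qed.

Lemma D1_even_ext f t : Xsym c t -> derivable f `|t| 1 ->
  D1 (even_ext f) t = Num.sg t * delta p q f `|t|.
Proof.
move=> Xt df; rewrite /D1 derive1_even_ext ?(Xsym_neq0 Xt) //.
by rewrite /even_ext /odd_ext /delta normrN subrr mul0r mulr0 addr0; field.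
Qed.

Lemma D1_odd_ext g t : Xsym c t -> derivable g `|t| 1 ->
  D1 (odd_ext g) t = - delta_star w p q g `|t|.
Proof.
move=> Xt dg; have t0 := Xsym_neq0 Xt; have Xu := Xsym_norm Xt.
rewrite /D1 derive1_odd_ext // (derive1_even_ext t0 (dw Xu)).
rewrite (derive1_even_ext t0 (dp Xu)).
have sg2 : Num.sg t * Num.sg t = 1 by rewrite -expr2 sqr_sg t0.
rewrite /even_ext /odd_ext /delta_star sgrN normrN mulNr addrN mul0r mulr0 addr0.
rewrite opprK [(_ + _) / 2]mulrDl -splitr.
by rewrite -[g `|t| in RHS]mul1r -sg2; ring.
Qed.

End ReflectionOperator.

(* The index D_j moves m to; [partner1 0 = 0] by truncation, which is harmless
   since the coefficient [ladder_coef a lam 0] vanishes. *)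
Definition partner1 (m : nat) : nat := if odd m then m.+1 else m.-1.

Lemma partner1K : involutive partner1.
Proof.
case=> [|m] //; rewrite /partner1 /=.
by case: (boolP (odd m)) => om /=; rewrite ?om.
Qed.

Lemma uphalf_partner1 m : (partner1 m).+1./2 = m.+1./2.
Proof.
rewrite /partner1 -(odd_double_half m).
by case: (odd m) => /=; rewrite ?odd_double /=; lia.
Qed.

Definition ladder_coef (R : realType) (a : R) (lam : nat -> R) (m : nat) : R :=
  (-1) ^+ m.+1 * Num.sqrt (lam m.+1./2 - a).

Section EigenfunctionLadder.
Variables (R : realType) (c : \bar R) (w p q : R -> R) (a : R) (lam : nat -> R)
  (phi : nat -> R -> R).
Hypothesis dw : forall u, Xset c u -> derivable w u 1.
Hypothesis dp : forall u, Xset c u -> derivable p u 1.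
Hypothesis dq : forall u, Xset c u -> derivable q u 1.
Hypothesis dphi : forall k u, Xset c u -> derivable (phi k) u 1.
Hypothesis ddphi : forall k u, Xset c u -> derivable (derive1 (phi k)) u 1.
Hypothesis w_gt0 : forall u, Xset c u -> 0 < w u.
Hypothesis eigen : forall k u, Xset c u ->
  a * phi k u + delta_star w p q (delta p q (phi k)) u = lam k * phi k u.
Hypothesis lam_lt : forall k, lam k < lam k.+1.
Hypothesis a_lam0 : a = lam 0.
Hypothesis delta_adjoint : forall k m,
  ip c w (delta p q (phi k)) (delta p q (phi m))
  = ip c w (delta_star w p q (delta p q (phi k))) (phi m).

Local Notation Phi1 := (Phi1 p q a lam phi).
Local Notation sigma m := (Num.sqrt (lam m - a)).
Local Notation r := (Num.sqrt 2)^-1.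

Lemma derivable_delta_phi k u : Xset c u -> derivable (delta p q (phi k)) u 1.
Proof.
move=> Xu; rewrite (_ : delta p q (phi k) = p * derive1 (phi k) + q * phi k) //.
by apply: derivableD; apply: derivableM;
  [exact: dp | exact: ddphi | exact: dq | exact: dphi].
Qed.

Lemma delta_phi0 u : Xset c u -> delta p q (phi 0) u = 0.
Proof.
apply: ip_self_eq0 => [x Xx|x Xx||].
- exact/derivable_continuous/dw.
- exact/derivable_continuous/derivable_delta_phi.
- exact: w_gt0.
rewrite delta_adjoint /ip -(integral0 lebesgue_measure (Xset c)).
apply: eq_integral => x /set_mem Xx.
have := eigen 0 Xx; rewrite -a_lam0 => ground.
have -> : delta_star w p q (delta p q (phi 0)) x = 0 by lra.
by rewrite !mul0r.
Qed.

Lemma lam_gt_a k : a < lam k.+1.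
Proof. by rewrite a_lam0; elim: k => [|k IHk]; [|apply: lt_trans IHk _]. Qed.

Lemma lam_ge_a m : a <= lam m.
Proof. by case: m => [|m]; [rewrite a_lam0 | exact/ltW/lam_gt_a]. Qed.

Lemma sigma_gt0 k : 0 < sigma k.+1.
Proof. by rewrite sqrtr_gt0 subr_gt0 lam_gt_a. Qed.

Lemma sqr_sigma k : sigma k.+1 ^+ 2 = lam k.+1 - a.
Proof. by rewrite sqr_sqrtr // subr_ge0 ltW // lam_gt_a. Qed.

Lemma Phi1_double k : Phi1 k.*2 = fun t => r * even_ext (phi k) t.
Proof. by rewrite /Phi1 odd_double doubleK. Qed.

Lemma Phi1_double_succ k t : Xsym c t ->
  Phi1 k.*2.+1 t = - (r / sigma k.+1) * odd_ext (delta p q (phi k.+1)) t.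
Proof.
move=> Xt; rewrite /Phi1 /= odd_double /= doubleK.
by rewrite (delta_even_ext (c := c)) //; [ring | exact/dphi/Xsym_norm].
Qed.

Lemma derivable_Phi1 n t : Xsym c t -> derivable (Phi1 n) t 1.
Proof.
move=> Xt; have [t0 Xu] := (Xsym_neq0 Xt, Xsym_norm Xt).
rewrite -(odd_double_half n); case: (odd n); rewrite ?add1n ?add0n.
  apply: (near_eq_derivable (f := fun y => - (r / sigma (n./2).+1) *
      odd_ext (delta p q (phi (n./2).+1)) y)).
    by near=> y; apply/esym/Phi1_double_succ; near: y; exact: Xsym_nbhs.
  exact/derivableZ/derivable_odd_ext/derivable_delta_phi.
by rewrite Phi1_double; exact/derivableZ/derivable_even_ext/dphi.
Unshelve. all: by end_near. Qed.

Lemma D1_Phi1_double k t : Xsym c t ->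
  D1 w p q (Phi1 k.*2) t = r * Num.sg t * delta p q (phi k) `|t|.
Proof.
move=> Xt; have [t0 Xu] := (Xsym_neq0 Xt, Xsym_norm Xt).
rewrite Phi1_double D1_scale; last exact/derivable_even_ext/dphi.
by rewrite (D1_even_ext _ _ _ Xt) ?mulrA //; exact: dphi.
Qed.

Lemma D1_Phi1_double_succ k t : Xsym c t ->
  D1 w p q (Phi1 k.*2.+1) t = sigma k.+1 * Phi1 (k.+1).*2 t.
Proof.
move=> Xt; have [t0 Xu] := (Xsym_neq0 Xt, Xsym_norm Xt).
rewrite (D1_local _ _ _ Xt (Phi1_double_succ k)) D1_scale; last first.
  exact/derivable_odd_ext/derivable_delta_phi.
rewrite (D1_odd_ext q dw dp Xt); last exact: derivable_delta_phi.
rewrite Phi1_double /even_ext.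
have gap : delta_star w p q (delta p q (phi k.+1)) `|t|
    = sigma k.+1 ^+ 2 * phi k.+1 `|t|.
  by rewrite sqr_sigma mulrBl -(eigen k.+1 Xu); ring.
by rewrite gap; field; rewrite !gt_eqF ?sigma_gt0 ?sqrtr_gt0.
Qed.

Local Notation kappa := (ladder_coef a lam).

Lemma ladder_coef0 : kappa 0 = 0.
Proof. by rewrite /ladder_coef /= a_lam0 subrr sqrtr0 mulr0. Qed.

Lemma ladder_coef_odd k : kappa k.*2.+1 = sigma k.+1.
Proof. by rewrite /ladder_coef -doubleS doubleK -signr_odd odd_double mul1r. Qed.

Lemma ladder_coef_evenS k : kappa k.*2.+2 = - sigma k.+1.
Proof.
rewrite /ladder_coef [_./2]/= uphalf_double -signr_odd /= odd_double.
by rewrite expr1 mulN1r.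
Qed.

Lemma D1_Phi1 n t : Xsym c t ->
  D1 w p q (Phi1 n) t = kappa n * Phi1 (partner1 n) t.
Proof.
move=> Xt; rewrite -(odd_double_half n) /partner1; move: (n./2) => k.
case: (odd n); rewrite ?add1n ?add0n /= odd_double /=.
  by rewrite D1_Phi1_double_succ // ladder_coef_odd.
case: k => [|k]; rewrite ?double0 ?doubleS /=.
  rewrite (D1_Phi1_double 0 Xt) (delta_phi0 (Xsym_norm Xt)) ladder_coef0.
  by rewrite !mul0r mulr0.
rewrite -doubleS D1_Phi1_double // doubleS ladder_coef_evenS.
rewrite Phi1_double_succ // /odd_ext.
by field; rewrite !gt_eqF ?sigma_gt0 ?sqrtr_gt0.
Qed.

Lemma ladder_coef_partner1 m :
  kappa m * kappa (partner1 m) = - (lam m.+1./2 - a).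
Proof.
case: m => [|m]; first by rewrite ladder_coef0 a_lam0 subrr mul0r oppr0.
rewrite /ladder_coef uphalf_partner1 mulrACA -expr2 sqr_sqrtr; last first.
  by rewrite subr_ge0 lam_ge_a.
rewrite -exprD /partner1 -signr_odd oddD /=.
by case: (boolP (odd m)) => om; rewrite /= ?om /= expr1 mulN1r.
Qed.

End EigenfunctionLadder.

Section TensorProduct.
Variables (R : realType) (d : nat) (c : \bar R) (w p q : 'I_d -> R -> R)
  (a : 'I_d -> R) (lam : 'I_d -> nat -> R) (phi : 'I_d -> nat -> R -> R)
  (j : 'I_d).

Local Notation Phi1 i := (Phi1 (p i) (q i) (a i) (lam i) (phi i)).

Definition Phin (n : 'I_d -> nat) : ('I_d -> R) -> R :=
  Phi p q a lam phi (fun i => (n i)%:Z).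

Definition partner (n : 'I_d -> nat) : 'I_d -> nat :=
  fun i => if i == j then partner1 (n i) else n i.

Lemma partnerK : involutive partner.
Proof.
move=> n; apply/funext => i; rewrite /partner.
by case: eqP => [->|]; rewrite ?eqxx ?partner1K.
Qed.

Lemma Phin_tensor n y :
  Phin n y = Phi1 j (n j) (y j) * \prod_(i < d | i != j) Phi1 i (n i) (y i).
Proof.
rewrite /Phin /Phi; have -> : [forall i, (0 <= (n i)%:Z)%R] by apply/forallP.
by rewrite (bigD1 j) //=; under eq_bigr do rewrite absz_nat.
Qed.

Lemma XX_refl x : XX c x -> XX c (refl j x).
Proof.
by move=> Xx i; rewrite /refl; case: eqP => _; [exact: XsymN | exact: Xx].
Qed.

Lemma Dj_local f g x : XX c x -> (forall y, XX c y -> f y = g y) ->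
  Dj w p q j f x = Dj w p q j g x.
Proof.
move=> Xx fg; rewrite /Dj /partial (fg x Xx) (fg _ (XX_refl Xx)) !derive1E.
rewrite (@near_eq_derive _ _ _ (fun t => f (upd x j t)) (fun t => g (upd x j t)))
  //.
near=> t; apply: fg => i; rewrite /upd; case: eqP => _; last exact: Xx.
by near: t; exact: Xsym_nbhs.
Unshelve. all: by end_near. Qed.

Lemma Dj_tensor (F : R -> R) (G : ('I_d -> R) -> R) x :
  derivable F (x j) 1 -> (forall t, G (upd x j t) = G x) -> G (refl j x) = G x ->
  Dj w p q j (fun y => F (y j) * G y) x = D1 (w j) (p j) (q j) F (x j) * G x.
Proof.
move=> dF Gupd Grefl; rewrite /Dj /partial /D1 Grefl /refl eqxx.
have -> : (fun t => F (upd x j t j) * G (upd x j t)) = (fun t => F t * G x).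
  by apply/funext => t; rewrite Gupd /upd eqxx.
by rewrite derive1Mr //; ring.
Qed.

Variable kappa : nat -> R.
Hypothesis derivable_Phi1j : forall m t, Xsym c t -> derivable (Phi1 j m) t 1.
Hypothesis D1_Phi1j : forall m t, Xsym c t ->
  D1 (w j) (p j) (q j) (Phi1 j m) t = kappa m * Phi1 j (partner1 m) t.

Lemma Dj_Phin n C x : XX c x ->
  Dj w p q j (fun y => C * Phin n y) x = C * kappa (n j) * Phin (partner n) x.
Proof.
move=> Xx; pose Q y := \prod_(i < d | i != j) Phi1 i (n i) (y i).
have -> : (fun y => C * Phin n y) = fun y => Phi1 j (n j) (y j) * (C * Q y).
  by apply/funext => y; rewrite Phin_tensor /Q; ring.
rewrite Dj_tensor; last 3 first.
- exact: derivable_Phi1j.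
- by move=> t; congr (_ * _); apply: eq_bigr => i /negPf ij; rewrite /upd ij.
- by congr (_ * _); apply: eq_bigr => i /negPf ij; rewrite /refl ij.
rewrite D1_Phi1j // Phin_tensor /partner eqxx.
have -> : \prod_(i < d | i != j)
    Phi1 i (if i == j then partner1 (n i) else n i) (x i) = Q x.
  by apply: eq_bigr => i /negPf ->.
by rewrite /Q; ring.
Qed.

End TensorProduct.

Section IterateInvolution.
Variables (R : comRingType) (T I : Type) (U : set T) (D : (T -> R) -> T -> R)
  (Psi : I -> T -> R) (pi : I -> I) (kappa : I -> R).
Hypothesis D_local :
  forall f g x, U x -> (forall y, U y -> f y = g y) -> D f x = D g x.
Hypothesis D_Psi : forall i C x, U x ->
  D (fun y => C * Psi i y) x = C * kappa i * Psi (pi i) x.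
Hypothesis piK : involutive pi.

Lemma iter_double i M x : U x ->
  iter M.*2 D (Psi i) x = (kappa i * kappa (pi i)) ^+ M * Psi i x.
Proof.
elim: M x => [|M IHM] x Ux; first by rewrite /= mul1r.
have once y : U y -> D (iter M.*2 D (Psi i)) y
    = (kappa i * kappa (pi i)) ^+ M * kappa i * Psi (pi i) y.
  by move=> Uy; rewrite (D_local Uy IHM) (D_Psi _ _ Uy).
by rewrite doubleS /= (D_local Ux once) (D_Psi _ _ Ux) piK exprS; ring.
Qed.

Lemma iter_double_succ i M x : U x ->
  iter M.*2.+1 D (Psi i) x
  = (kappa i * kappa (pi i)) ^+ M * kappa i * Psi (pi i) x.
Proof. by move=> Ux; rewrite /= (D_local Ux (iter_double i M)) (D_Psi _ _ Ux). Qed.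

End IterateInvolution.

Lemma Cn_on_derivable (R : realType) n A (f : R -> R) u :
  Cn_on n A f -> (0 < n)%N -> A u -> derivable f u 1.
Proof. by move=> [df _] n0 Au; have := df 0%N n0 u Au; rewrite derive1n0. Qed.

Lemma Cn_on_derivable_derive1 (R : realType) n A (f : R -> R) u :
  Cn_on n A f -> (1 < n)%N -> A u -> derivable (derive1 f) u 1.
Proof. by move=> [df _] n1 Au; have := df 1%N n1 u Au; rewrite derive1n1. Qed.

Lemma powR_half (R : realType) (v : R) N : 0 <= v ->
  v `^ (N%:R / 2) = Num.sqrt v ^+ N.
Proof.
by move=> v0; rewrite mulrC powRrM powR12_sqrt // powR_mulrn // sqrtr_ge0.
Qed.

Lemma Phin_partner (R : realType) d (p q : 'I_d -> R -> R) a lam phi j n :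
  n j != 0%N -> Phin p q a lam phi (partner j n)
  = Phi p q a lam phi (fun i => (n i)%:Z - (if i == j then (-1) ^+ n j else 0)).
Proof.
move=> nj0; congr Phi; apply/funext => i; rewrite /partner.
case: eqP => [->|_]; last by rewrite subr0.
rewrite /partner1 -signr_odd; case: (odd (n j)) => /=; lia.
Qed.

Theorem mainTheorem5 (R : realType) (d : nat) (c : \bar R)
  (w p q : 'I_d -> R -> R) (a : 'I_d -> R) (lam : 'I_d -> nat -> R)
  (phi : 'I_d -> nat -> R -> R) :
  (0 < d)%N -> (0 < c)%E ->
  (forall i, Cn_on 2 (Xset c) (w i) /\ (forall x, Xset c x -> 0 < w i x)) ->
  (forall i, Cn_on 2 (Xset c) (p i) /\ (forall x, Xset c x -> p i x != 0)) ->
  (forall i, Cn_on 1 (Xset c) (q i)) ->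
  (forall i, 0 <= a i) ->
  (forall i, ONB c (w i) (phi i)) ->
  (forall i k, Cinf_on (Xset c) (phi i k)) ->
  (forall i k x, Xset c x ->
     a i * phi i k x
     + delta_star (w i) (p i) (q i) (delta (p i) (q i) (phi i k)) x
     = lam i k * phi i k x) ->
  (forall i k, lam i k < lam i k.+1) ->
  (forall i, lam i @ \oo --> +oo) ->
  (forall i k, L2 c (w i) (delta (p i) (q i) (phi i k))) ->
  (forall i k m,
     ip c (w i) (delta (p i) (q i) (phi i k)) (delta (p i) (q i) (phi i m))
     = ip c (w i) (delta_star (w i) (p i) (q i) (delta (p i) (q i) (phi i k)))
                  (phi i m)) ->
  (forall i, a i = lam i 0%N) ->
  forall (j : 'I_d) (N : nat) (n : 'I_d -> nat), (0 < N)%N ->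
  forall x, XX c x ->
  iter N (Dj w p q j) (Phi p q a lam phi (fun i => (n i)%:Z)) x =
  if ~~ odd N then
    (-1) ^+ N./2 * (lam j (n j).+1./2 - a j) `^ (N%:R / 2)
    * Phi p q a lam phi (fun i => (n i)%:Z) x
  else
    (-1) ^+ (n j + 1 + N.-1./2)%N * (lam j (n j).+1./2 - a j) `^ (N%:R / 2)
    * Phi p q a lam phi
        (fun i => (n i)%:Z - (if i == j then (-1) ^+ n j else 0)) x.
Proof.
move=> _ _ Hw Hp Hq _ _ Hphi eigen lam_lt _ _ adjoint a_lam0 j N n N0 x Xx.
have dw u : Xset c u -> derivable (w j) u 1 := Cn_on_derivable (Hw j).1 isT.
have dp u : Xset c u -> derivable (p j) u 1 := Cn_on_derivable (Hp j).1 isT.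
have dq u : Xset c u -> derivable (q j) u 1 := Cn_on_derivable (Hq j) isT.
have dphi k u : Xset c u -> derivable (phi j k) u 1 :=
  Cn_on_derivable (Hphi j k 1) isT.
have ddphi k u : Xset c u -> derivable (derive1 (phi j k)) u 1 :=
  Cn_on_derivable_derive1 (Hphi j k 2) isT.
have step := Dj_Phin (derivable_Phi1 dp dq dphi ddphi)
  (D1_Phi1 dw dp dq dphi ddphi (Hw j).2 (eigen j) (lam_lt j) (a_lam0 j) (adjoint j)).
set mu := lam j (n j).+1./2 - a j.
have mu_ge0 : 0 <= mu by rewrite subr_ge0 (lam_ge_a (lam_lt j) (a_lam0 j)).
have coef_sq : ladder_coef (a j) (lam j) (n j)
    * ladder_coef (a j) (lam j) (partner j n j) = - mu.
  by rewrite /partner eqxx (ladder_coef_partner1 (lam_lt j) (a_lam0 j)).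
have local := @Dj_local _ _ c w p q j.
change (Phi p q a lam phi (fun i => (n i)%:Z)) with (Phin p q a lam phi n).
rewrite powR_half //.
have [[M ->]|[M ->]] : (exists M, N = M.*2) \/ (exists M, N = M.*2.+1).
  by case: (boolP (odd N)) => oN; [right|left]; exists N./2;
    rewrite -[N in LHS]odd_double_half ?oN // (negbTE oN).
- rewrite odd_double /= doubleK (iter_double local step (partnerK j)) // coef_sq.
  by rewrite -mul2n exprM sqr_sqrtr // (exprNn mu).
rewrite (iter_double_succ local step (partnerK j)) // oddS odd_double /= doubleK.
rewrite coef_sq /ladder_coef -/mu (exprSr (Num.sqrt mu)) -mul2n exprM.
rewrite sqr_sqrtr // (exprNn mu) exprD addn1.
have [nj0|nj0] := eqVneq (n j) 0%N.
  by rewrite /mu nj0 (a_lam0 j) subrr sqrtr0 !(mulr0, mul0r).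
by rewrite Phin_partner //; ring.
Qed.
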